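(* There is a function $C(t,\epsilon)$ such that the following holds for every positive integer $t$ and every $\epsilon\in(0,1)$: let $G$ be a connected balanced bipartite graph with parts $X,Y$, with $\delta(G)\geq C(t,\epsilon)$ and with no induced $S_{t,t}$. Then for all $x\in X$ and $y\in Y$ we have $|N(x)\cap U_Y(\epsilon)|\leq C(t,\epsilon)$ and $|N(y)\cap U_X(\epsilon)|\leq C(t,\epsilon)$.
   Context: For positive integers $a,b$, the biclaw $S_{a,b}$ is the graph with vertex set $\{x,x_1,\dots,x_a,y,y_1,\dots,y_b\}$ and edges $xy$, $xy_1,\dots,xy_b$, $yx_1,\dots,yx_a$; ''no induced $S_{t,t}$'' means no induced subgraph isomorphic to $S_{t,t}$. Balanced means $|X|=|Y|$. For a bipartite graph with parts $X,Y$, $\Delta_X=\max_{x\in X} d(x)$, $\Delta_Y=\max_{y\in Y}d(y)$, and for $\epsilon\in(0,1)$, $U_X(\epsilon)=\{x\in X: d(x)\leq (1-\epsilon)\Delta_X\}$, $U_Y(\epsilon)=\{y\in Y: d(y)\leq(1-\epsilon)\Delta_Y\}$. $N(v)$ is the neighbourhood and $\delta(G)$ the minimum degree. *)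

From mathcomp Require Import all_boot all_order all_algebra.
From mathcomp Require Import reals.
Set Implicit Arguments. Unset Strict Implicit. Unset Printing Implicit Defensive.
Import Order.TTheory GRing.Theory Num.Theory.

Definition simple_graph (T : finType) (e : rel T) : Prop :=
  symmetric e /\ irreflexive e.

Definition nbhd (T : finType) (e : rel T) (v : T) : {set T} := [set w | e v w].
Definition deg (T : finType) (e : rel T) (v : T) : nat := #|nbhd e v|.

Definition connected_graph (T : finType) (e : rel T) : Prop :=
  forall u v : T, connect e u v.

Definition bipartite_parts (T : finType) (e : rel T) (X Y : {set T}) : Prop :=
  [/\ X :&: Y = set0, X :|: Y = setT &
      forall u v, e u v -> (u \in X /\ v \in Y) \/ (u \in Y /\ v \in X)].

Definition balanced (T : finType) (X Y : {set T}) : Prop := #|X| = #|Y|.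

Definition min_deg_ge (T : finType) (e : rel T) (k : nat) : Prop :=
  forall v : T, k <= deg e v.

(* Biclaw S_{a,b}: vertices inl true = x, inl false = y,
   inr (inl i) = x_i (i < a), inr (inr j) = y_j (j < b);
   edges xy, x y_j, y x_i. *)
Definition biclaw_V (a b : nat) : finType := (bool + ('I_a + 'I_b))%type.

Definition biclaw_adj (a b : nat) : rel (biclaw_V a b) :=
  fun u v =>
    match u, v with
    | inl p, inl q => p != q
    | inl true, inr (inr _) => true
    | inr (inr _), inl true => true
    | inl false, inr (inl _) => true
    | inr (inl _), inl false => true
    | _, _ => false
    end.

Definition has_induced_biclaw (T : finType) (e : rel T) (a b : nat) : Prop :=
  exists f : biclaw_V a b -> T,
    injective f /\ forall u v, e (f u) (f v) = biclaw_adj u v.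

Local Open Scope ring_scope.

Definition maxdeg (T : finType) (e : rel T) (X : {set T}) : nat :=
  (\max_(x in X) deg e x)%N.

(* U_X(eps) = { x in X : d(x) <= (1 - eps) Delta_X }. *)
Definition lowdeg (R : realType) (T : finType) (e : rel T) (X : {set T})
  (eps : R) : {set T} :=
  [set x in X | (deg e x)%:R <= (1 - eps) * (maxdeg e X)%:R].

(* Fix r >= 4 with r * eps >= 3 and put K = t (2r)^t.  For an edge uv, call q in N(u) - v a
   misser of uv if q is non-adjacent to at least a 1/r-fraction of N(v) - u.  A greedy double
   count turns K missers into t missers and t vertices of N(v) - u with no edge between the two
   groups; with u and v they induce S_{t,t}.  So every edge has fewer than K missers.

   Let ys in Y have maximum degree D.  Call y good if it sees all but D/r vertices of N(ys),
   and strong if it has K + 2 common neighbours with ys.  Having a strong neighbour spreads from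
   x in X to every vertex of X sharing a neighbour with x, so by connectivity every x in X has a
   strong neighbour, hence almost all its neighbours are good.  If y1 is a good neighbour of x,
   then a neighbour q of x of degree at most (1 - eps) D <= (1 - 3/r) D is a misser of x y1,
   so there are fewer than K such q.  The bound for Y follows by exchanging X and Y. *)

From mathcomp Require Import all_boot all_order all_algebra.
From mathcomp Require Import reals.
From mathcomp Require Import zify lra.
Set Implicit Arguments. Unset Strict Implicit. Unset Printing Implicit Defensive.
Import Order.TTheory GRing.Theory Num.Theory.

Lemma exists_setD_of_card_lt (T : finType) (A B : {set T}) :
  #|B| < #|A| -> exists2 x, x \in A & x \notin B.
Proof.
by move=> ltBA; apply/subsetPn; apply: contraTN ltBA => /subset_leq_card; rewrite -leqNgt.
Qed.

Lemma exists_ge_average (T : finType) (S : {set T}) (f : T -> nat) a b :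
  S != set0 -> a * #|S| <= b * \sum_(p in S) f p -> exists2 p, p \in S & a <= b * f p.
Proof.
move=> /set0Pn[p0 p0S] avg; apply/exists_inP; apply: contraLR avg.
rewrite negb_exists_in => /forall_inP small.
rewrite -ltnNge [a * _]mulnC -sum_nat_const big_distrr /=.
rewrite (bigD1 p0) //= [X in _ < X](bigD1 p0) //= -addSn leq_add ?ltnNge ?small //.
by apply: leq_sum => p /andP[pS _]; rewrite ltnW // ltnNge small.
Qed.

Lemma card_set_in_sum (I : finType) (A : {set I}) (R : pred I) :
  #|[set q in A | R q]| = \sum_(q in A) R q.
Proof.
rewrite -sum1_card big_mkcond [RHS]big_mkcond; apply: eq_bigr => q _.
by rewrite inE; case: (q \in A); case: (R q).
Qed.

Lemma leq_card_setU3 (T : finType) (A B C : {set T}) :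
  #|A :|: B :|: C| <= #|A| + #|B| + #|C|.
Proof. by rewrite (leq_trans (leq_card_setU _ _).1) // leq_add2r (leq_card_setU _ _).1. Qed.

Section DenseBiclique.
Variables (I J : finType) (R : I -> J -> bool) (r t : nat) (F : {set I}) (P : {set J}).
Hypotheses (r_gt0 : 0 < r) (P_big : 2 * t * r <= #|P|)
  (F_dense : forall q, q \in F -> #|P| <= r * #|[set p in P | R q p]|).

Lemma dense_rel_extend (A : {set J}) (F' : {set I}) :
  #|A| < t -> F' != set0 -> F' \subset F ->
  exists2 p, p \in P :\: A & #|F'| <= 2 * r * #|[set q in F' | R q p]|.
Proof.
move=> At F'n0 F'F; set S := P :\: A.
have S_dense q : q \in F' -> #|P| <= 2 * r * #|[set p in S | R q p]|.
  move=> qF'; have dq := F_dense (subsetP F'F q qF').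
  have : #|[set p in P | R q p]| <= #|[set p in S | R q p]| + #|A|.
    rewrite -(cardsID A [set p in P | R q p]) addnC leq_add ?subset_leq_card //.
      by apply/subsetP=> p; rewrite !inE; case: (p \in A); case: (p \in P).
    exact: subsetIr.
  nia.
have S_n0 : S != set0.
  have [q qF'] := set0Pn _ F'n0.
  have : 0 < #|[set p in S | R q p]| by have := S_dense q qF'; nia.
  by rewrite card_gt0 => /set0Pn[p]; rewrite inE => /andP[pS _]; apply/set0Pn; exists p.
apply: exists_ge_average => //.
have double_count : \sum_(p in S) #|[set q in F' | R q p]| = \sum_(q in F') #|[set p in S | R q p]|.
  under eq_bigr do rewrite card_set_in_sum.
  by rewrite exchange_big; apply: eq_bigr => q _; rewrite card_set_in_sum.
rewrite double_count big_distrr /= -sum_nat_const.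
apply: (@leq_trans (\sum_(q in F') #|P|)); last exact: leq_sum.
by apply: leq_sum => q _; apply: subset_leq_card; apply: subsetDl.
Qed.

Lemma dense_rel_greedy j : j <= t -> t * (2 * r) ^ t <= #|F| ->
  exists A : {set J}, exists F' : {set I},
    [/\ A \subset P, #|A| = j, F' \subset F, #|F| <= #|F'| * (2 * r) ^ j &
        forall p q, p \in A -> q \in F' -> R q p].
Proof.
move=> + Fbig; elim: j => [_|j IHj ltjt].
  exists set0, F; split; rewrite ?sub0set ?cards0 ?muln1 //.
  by move=> p q; rewrite inE.
have [A [F' [AP cardA F'F F'big AF']]] := IHj (ltnW ltjt).
have F'n0 : F' != set0.
  apply: contraTneq F'big => ->; rewrite cards0 mul0n -ltnNge.
  apply: leq_trans Fbig; rewrite muln_gt0 expn_gt0 muln_gt0 r_gt0; lia.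
have ltAt : #|A| < t by rewrite cardA.
have [p /setDP[pP pA] F'p] := dense_rel_extend ltAt F'n0 F'F.
exists (p |: A), [set q in F' | R q p]; split.
- by rewrite subUset sub1set pP.
- by rewrite cardsU1 pA cardA.
- by apply: subset_trans F'F; apply/subsetP=> q; rewrite inE => /andP[].
- by rewrite expnS mulnA; apply: leq_trans F'big _; rewrite leq_mul2r [_ * (2 * r)]mulnC F'p orbT.
- by move=> p' q; rewrite !inE => /predU1P[->|p'A] /andP[qF' Rqp] //; apply: AF'.
Qed.

Lemma dense_rel_biclique : t * (2 * r) ^ t <= #|F| ->
  exists A : {set J}, exists B : {set I},
    [/\ A \subset P, B \subset F, t <= #|A|, t <= #|B| &
        forall p q, p \in A -> q \in B -> R q p].
Proof.
move=> Fbig; have [A [B [AP cardA BF Bbig AB]]] := dense_rel_greedy (leqnn t) Fbig.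
exists A, B; split; rewrite ?cardA //.
by move: (leq_trans Fbig Bbig); rewrite leq_mul2r expn_eq0 muln_eq0 -[r == 0]negbK -lt0n r_gt0.
Qed.

End DenseBiclique.

Definition misses (T : finType) (e : rel T) (r : nat) (P : {set T}) (q : T) : bool :=
  #|P| <= r * #|P :\: nbhd e q|.

Definition missers (T : finType) (e : rel T) (r : nat) (u v : T) : {set T} :=
  [set q in nbhd e u :\ v | misses e r (nbhd e v :\ u) q].

Section Neighbourhoods.
Variables (T : finType) (e : rel T).

Lemma in_nbhd u v : (u \in nbhd e v) = e v u.
Proof. by rewrite inE. Qed.

Lemma deg_nbhdD1 u v : e v u -> deg e v = #|nbhd e v :\ u|.+1.
Proof. by move=> evu; rewrite /deg (cardsD1 u) in_nbhd evu. Qed.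

Lemma not_misses_lt r (P : {set T}) q : ~~ misses e r P q -> r * #|P :\: nbhd e q| < #|P|.
Proof. by rewrite /misses ltnNge. Qed.

Lemma misses_setD1 r (P : {set T}) q x : e q x -> misses e r P q -> misses e r (P :\ x) q.
Proof.
move=> eqx; rewrite /misses; have -> : P :\ x :\: nbhd e q = P :\: nbhd e q.
  by apply/setP => p; rewrite !inE; case: eqP => // ->; rewrite eqx.
by apply: leq_trans; apply/subset_leq_card/subD1set.
Qed.

End Neighbourhoods.

Lemma exists_ord_injection (T : finType) (A : {set T}) n :
  n <= #|A| -> exists2 f : 'I_n -> T, injective f & forall i, f i \in A.
Proof.
move=> leAn; exists (fun i => enum_val (widen_ord leAn i)); last by move=> i; apply: enum_valP.
by move=> i j /enum_val_inj /(congr1 val) /= /val_inj.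
Qed.

Section TriangleFree.
Variables (T : finType) (e : rel T).
Hypotheses (e_sym : symmetric e) (e_irr : irreflexive e)
  (e_tri_free : forall u v w, e u v -> e v w -> ~~ e w u).

Lemma induced_biclaw_of_maps a b u v (fA : 'I_a -> T) (fB : 'I_b -> T) :
  e u v -> injective fA -> injective fB ->
  (forall i, fA i != u /\ e v (fA i)) -> (forall j, fB j != v /\ e u (fB j)) ->
  (forall i j, ~~ e (fA i) (fB j)) -> has_induced_biclaw e a b.
Proof.
move=> euv fA_inj fB_inj fA_nbhd fB_nbhd anti.
have Av i : e v (fA i) by case: (fA_nbhd i).
have Bu j : e u (fB j) by case: (fB_nbhd j).
have uA i : e u (fA i) = false by rewrite e_sym; apply: negbTE (e_tri_free euv (Av i)).
have vB j : e v (fB j) = false by rewrite e_sym; apply: negbTE (e_tri_free _ (Bu j)); rewrite e_sym.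
have AA i j : e (fA i) (fA j) = false by apply: negbTE (e_tri_free _ (Av i)); rewrite e_sym.
have BB i j : e (fB i) (fB j) = false by apply: negbTE (e_tri_free _ (Bu i)); rewrite e_sym.
have AB i j : e (fA i) (fB j) = false := negbTE (anti i j).
have BA j i : e (fB j) (fA i) = false by rewrite e_sym AB.
pose f w := match w with
  | inl true => u | inl false => v | inr (inl i) => fA i | inr (inr j) => fB j end.
have neq_uv : (u == v) = false by apply: contraTF euv => /eqP->; rewrite e_irr.
have neq_Au i : (fA i == u) = false by apply/negbTE; case: (fA_nbhd i).
have neq_Av i : (fA i == v) = false by apply: contraTF (Av i) => /eqP->; rewrite e_irr.
have neq_Bu j : (fB j == u) = false by apply: contraTF (Bu j) => /eqP->; rewrite e_irr.
have neq_Bv j : (fB j == v) = false by apply/negbTE; case: (fB_nbhd j).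
have neq_AB i j : (fA i == fB j) = false by apply: contraTF (Av i) => /eqP->; rewrite vB.
exists f; split.
  case=> [[]|[i|j]] [[]|[i'|j']] //= /eqP eq_f;
  first [ by rewrite (fA_inj _ _ (eqP eq_f)) | by rewrite (fB_inj _ _ (eqP eq_f))
        | by move: eq_f; rewrite ?(neq_uv, neq_Au, neq_Av, neq_Bu, neq_Bv, neq_AB) //
                         eq_sym ?(neq_uv, neq_Au, neq_Av, neq_Bu, neq_Bv, neq_AB) ].
case=> [[]|[i|j]] [[]|[i'|j']] //=;
by rewrite ?e_irr ?uA ?vB ?AA ?BB ?AB ?BA ?euv ?Av ?Bu // e_sym ?uA ?vB ?euv ?Av ?Bu.
Qed.

Lemma induced_biclaw_of_anticomplete a b u v (A B : {set T}) :
  e u v -> A \subset nbhd e v :\ u -> B \subset nbhd e u :\ v -> a <= #|A| -> b <= #|B| ->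
  (forall p q, p \in A -> q \in B -> ~~ e p q) -> has_induced_biclaw e a b.
Proof.
move=> euv sA sB leaA lebB anti.
have [fA fA_inj fA_A] := exists_ord_injection leaA.
have [fB fB_inj fB_B] := exists_ord_injection lebB.
apply: (induced_biclaw_of_maps euv fA_inj fB_inj) => [i | j | i j]; last exact: anti.
  by have := subsetP sA _ (fA_A i); rewrite !inE => /andP[].
by have := subsetP sB _ (fB_B j); rewrite !inE => /andP[].
Qed.

Lemma card_missers_lt t r u v : 0 < r -> ~ has_induced_biclaw e t t -> e u v ->
  2 * t * r <= #|nbhd e v :\ u| -> #|missers e r u v| < t * (2 * r) ^ t.
Proof.
move=> r_gt0 noS euv Nv_big; rewrite ltnNge; apply/negP => missers_big.
have dense q : q \in missers e r u v ->
    #|nbhd e v :\ u| <= r * #|[set p in nbhd e v :\ u | ~~ e q p]|.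
  have -> : [set p in nbhd e v :\ u | ~~ e q p] = nbhd e v :\ u :\: nbhd e q.
    by apply/setP => p; rewrite !inE andbC.
  by rewrite inE => /andP[].
have [A [B [sA sB leA leB AB]]] := dense_rel_biclique r_gt0 Nv_big dense missers_big.
apply: noS; apply: (induced_biclaw_of_anticomplete euv sA _ leA leB).
  by apply: subset_trans sB _; apply/subsetP => q; rewrite inE => /andP[].
by move=> p q pA qB; rewrite e_sym AB.
Qed.

End TriangleFree.

Section Bipartite.
Variables (T : finType) (e : rel T) (X Y : {set T}).
Hypothesis bip : bipartite_parts e X Y.

Lemma bip_inY u : (u \in Y) = (u \notin X).
Proof.
case: bip => XY0 XYT _.
have : u \in X :|: Y by rewrite XYT inE.
have : u \notin X :&: Y by rewrite XY0 inE.
by rewrite !inE; case: (u \in X); case: (u \in Y).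
Qed.

Lemma bip_edge u v : e u v -> (v \in X) = (u \notin X).
Proof.
case: bip => _ _ /[apply]; rewrite !bip_inY.
by case=> -[]; case: (u \in X); case: (v \in X).
Qed.

Lemma bip_edgeXY u v : e u v -> u \in X -> v \in Y.
Proof. by move=> /bip_edge; rewrite bip_inY => ->->. Qed.

Lemma bip_edgeYX u v : e u v -> u \in Y -> v \in X.
Proof. by move=> /bip_edge->; rewrite bip_inY. Qed.

Lemma bip_triangle_free u v w : e u v -> e v w -> ~~ e w u.
Proof.
move=> /bip_edge vX /bip_edge wX; apply/negP => /bip_edge.
by rewrite wX vX negbK; case: (u \in X).
Qed.

Lemma bipartite_parts_sym : bipartite_parts e Y X.
Proof.
by case: bip => XY0 XYT edges; split; rewrite 1?setIC 1?setUC // => u v /edges[] []; auto.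
Qed.

End Bipartite.

Section Propagation.
Variables (T : finType) (e : rel T) (X Y : {set T}) (r K : nat).
Hypotheses (e_sym : symmetric e) (bip : bipartite_parts e X Y) (conn : connected_graph e)
  (r_ge4 : 4 <= r) (few_missers : forall u v, e u v -> #|missers e r u v| < K)
  (deg_big : forall v, 4 * r * (K + 2) <= deg e v).

Local Notation N := (nbhd e).

Section MaxDegree.
Variables (ys : T).
Hypotheses (ysY : ys \in Y) (ys_max : forall y, y \in Y -> deg e y <= deg e ys).

(* Good vertices are those outside [Miss]; weak vertices are those that are not strong. *)
Local Notation D := (deg e ys).
Local Notation Nys := (N ys).
Local Notation Miss := [set y | misses e r Nys y].
Local Notation strong y := (K + 2 <= #|Nys :&: N y|).
Local Notation Xstrong := [set x in X | [exists y, e x y && strong y]].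

Lemma card_nbhd_Miss_lt x : x \in Nys -> #|N x :&: Miss| < K.
Proof.
rewrite in_nbhd e_sym => exys; apply: leq_ltn_trans (few_missers exys).
apply: subset_leq_card; apply/subsetP => q; rewrite !inE => /andP[exq qM].
rewrite exq andbT; apply/andP; split; last by apply: misses_setD1; rewrite // e_sym.
apply: contraTneq qM => ->; rewrite /misses setDv cards0 muln0 -ltnNge.
by apply: leq_trans (deg_big ys); rewrite !muln_gt0; lia.
Qed.

Lemma strong_card_nbhd_Miss x y :
  e x y -> strong y -> r * #|N x :&: Miss| < r * (K + 1) + deg e x.
Proof.
move=> exy y_strong; have eyx : e y x by rewrite e_sym.
have [x2] : exists2 x2, x2 \in (Nys :&: N y) :\ x & x2 \notin missers e r y x.
  apply: exists_setD_of_card_lt; apply: leq_trans (few_missers eyx) _.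
  by have := cardsD1 x (Nys :&: N y); lia.
rewrite !inE => /and3P[x2x eysx2 eyx2]; rewrite x2x eyx2 /= => /not_misses_lt x2_sees.
have few_x2 : #|N x2 :&: Miss| < K by apply: card_nbhd_Miss_lt; rewrite in_nbhd.
have sub : N x :&: Miss \subset [set y] :|: ((N x :\ y) :\: N x2) :|: (N x2 :&: Miss).
  apply/subsetP => q; rewrite !inE => /andP[exq ->]; rewrite exq andbT /=.
  by case: eqP => //= _; case: (e x2 q).
have := leq_trans (subset_leq_card sub) (leq_card_setU3 _ _ _).
rewrite cards1 (deg_nbhdD1 exy); nia.
Qed.

Lemma exists_good_nbhd x y x2 : x \in Xstrong -> e y x -> ~~ misses e r (N x :\ y) x2 ->
  exists2 y1, e x2 y1 & y1 \notin Miss.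
Proof.
move=> /setIdP[_ /existsP[y' /andP[exy' /(strong_card_nbhd_Miss exy') few_M]]] eyx.
move=> /not_misses_lt x2_sees; have exy : e x y by rewrite e_sym.
have [y1] : exists2 y1, y1 \in (N x :\ y) :&: N x2 & y1 \notin N x :&: Miss.
  apply: exists_setD_of_card_lt.
  have := cardsID (N x2) (N x :\ y); have := deg_nbhdD1 exy; have := deg_big x; nia.
by rewrite !inE => /andP[/andP[_ ->] ex2y1] y1_good; exists y1; rewrite ?inE.
Qed.

Lemma weak_nbhd_in_missers x2 y1 q : y1 \in Y -> y1 \notin Miss -> e x2 y1 ->
  q \in N x2 :\ y1 -> ~~ strong q -> q \in missers e r x2 y1.
Proof.
rewrite inE => y1Y /not_misses_lt y1_good ex2y1 q_in; rewrite -ltnNge => q_weak.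
rewrite inE q_in /misses; move: q_in; rewrite !inE => /andP[_ ex2q].
have sub : Nys :\: N q \subset (Nys :\: N y1) :|: ((N y1 :\ x2) :\: N q).
  apply/subsetP => p; rewrite !inE => /andP[eqp ->]; rewrite eqp /=.
  by case: (e y1 p); rewrite //= andbT; apply: contraNneq eqp => ->; rewrite e_sym.
have miss := leq_trans (subset_leq_card sub) (leq_card_setU _ _).1.
have deg_y1 := ys_max y1Y.
have ey1x2 : e y1 x2 by rewrite e_sym.
rewrite (deg_nbhdD1 ey1x2) in deg_y1.
have := congr1 (muln r) (cardsID (N q) Nys).
have : r * #|Nys :\: N q| <= r * #|Nys :\: N y1| + r * #|(N y1 :\ x2) :\: N q|.
  by rewrite -mulnDr leq_mul2l miss orbT.
have : r * #|Nys :&: N q| <= r * (K + 1) by rewrite leq_mul2l; apply/orP; right; lia.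
have : 4 * #|Nys| <= r * #|Nys| by rewrite leq_mul2r r_ge4 orbT.
have := deg_big ys; rewrite /deg in deg_y1 *; lia.
Qed.

(* Pick a common neighbour x2 of x and xp that is a misser of neither yx nor yxp.  It has a
   good neighbour y1, and every weak neighbour of x2 is a misser of x2y1.  If xp had only weak
   neighbours, N(xp) would meet N(x2) in at most K vertices, although x2 sees most of N(xp). *)
Lemma Xstrong_common_nbhd y x xp : e y x -> e y xp -> x \in Xstrong -> xp \in Xstrong.
Proof.
move=> eyx eyxp xXst; have xX : x \in X by case/setIdP: xXst.
have exy : e x y by rewrite e_sym.
have yY := bip_edgeXY bip exy xX.
have xpX : xp \in X := bip_edgeYX bip eyxp yY.
apply/idPn => xp_notin.
have xp_weak q : e xp q -> ~~ strong q.
  move=> expq; apply: contra xp_notin => q_strong.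
  by rewrite inE xpX; apply/existsP; exists q; rewrite expq.
have [x2] : exists2 x2, x2 \in (N y :\ x) :\ xp &
                       x2 \notin missers e r y x :|: missers e r y xp.
  apply: exists_setD_of_card_lt; apply: leq_ltn_trans (leq_card_setU _ _).1 _.
  have := few_missers eyx; have := few_missers eyxp; have := cardsD1 xp (N y :\ x).
  have : 4 * K <= r * K by rewrite leq_mul2r r_ge4 orbT.
  by have := deg_nbhdD1 eyx; have := deg_big y; lia.
rewrite !inE negb_or => /and3P[x2xp x2x eyx2].
rewrite x2x x2xp eyx2 /= => /andP[x_seen xp_seen].
have [y1 ex2y1 y1_good] := exists_good_nbhd xXst eyx x_seen.
have y1Y := bip_edgeXY bip ex2y1 (bip_edgeYX bip eyx2 yY).
have sub : (N xp :\ y) :&: N x2 \subset y1 |: missers e r x2 y1.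
  apply/subsetP => q; rewrite in_setI in_setD1 !in_nbhd => /andP[/andP[_ expq] ex2q].
  rewrite in_setU1; case: eqP => //= /eqP qy1.
  apply: weak_nbhd_in_missers => //; last exact: xp_weak.
  by rewrite !inE qy1.
have cap_small : #|(N xp :\ y) :&: N x2| <= K.
  have := leq_trans (subset_leq_card sub) (leq_card_setU _ _).1.
  by rewrite cards1 add1n => /leq_trans; apply; apply: few_missers.
have : r * #|(N xp :\ y) :&: N x2| <= r * K by rewrite leq_mul2l cap_small orbT.
have := congr1 (muln r) (cardsID (N x2) (N xp :\ y)); move/not_misses_lt: xp_seen.
have : 4 * #|N xp :\ y| <= r * #|N xp :\ y| by rewrite leq_mul2r r_ge4 orbT.
have expy : e xp y by rewrite e_sym.
have := deg_big xp; rewrite (deg_nbhdD1 expy); clear -r_ge4; lia.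
Qed.

Local Notation Zstrong := [set w | (w \in Xstrong) || [exists x in Xstrong, e x w]].

Lemma closed_Zstrong : closed e Zstrong.
Proof.
have Xstrong_sub : {subset Xstrong <= X} by move=> x /setIdP[].
have in_Zstrong w : (w \in Zstrong) = (w \in Xstrong) || [exists x in Xstrong, e x w].
  by rewrite inE.
have closedX u v : e u v -> u \in X -> (u \in Zstrong) = (v \in Zstrong).
  move=> euv uX; have vY := bip_edgeXY bip euv uX.
  have vXst : v \notin Xstrong.
    by apply: contraTN vY => /Xstrong_sub; rewrite (bip_inY bip) negbK.
  have uN : ~~ [exists x in Xstrong, e x u].
    apply/exists_inP => -[x /Xstrong_sub xX exu].
    by move: (bip_edgeXY bip exu xX); rewrite (bip_inY bip) uX.
  rewrite !in_Zstrong (negbTE vXst) (negbTE uN) orbF /=.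
  apply/idP/exists_inP => [uXst | [x xXst exv]]; first by exists u.
  by apply: (Xstrong_common_nbhd (y := v)) xXst; rewrite e_sym.
move=> u v euv; have [uX | uY] := boolP (u \in X); first exact: closedX.
have evu : e v u by rewrite e_sym.
by rewrite (closedX v u evu) // (bip_edge bip euv).
Qed.

Lemma X_sub_Xstrong x : x \in X -> x \in Xstrong.
Proof.
move=> xX; have D_big := deg_big ys.
have [x1 eysx1] : exists x1, e ys x1.
  have : 0 < #|Nys| by apply: leq_trans D_big; rewrite !muln_gt0; lia.
  by rewrite card_gt0 => /set0Pn[x1]; rewrite in_nbhd; exists x1.
have x1Xst : x1 \in Xstrong.
  rewrite inE (bip_edgeYX bip eysx1 ysY); apply/existsP; exists ys; rewrite e_sym eysx1 setIid /=.
  by apply: leq_trans D_big; nia.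
have := closed_connect closed_Zstrong (conn x1 x).
rewrite [x1 \in _]inE x1Xst [x \in _]inE => /esym/orP[//|].
by case/exists_inP => x0 /setIdP[x0X _] /(bip_edgeXY bip) /(_ x0X); rewrite (bip_inY bip) xX.
Qed.

Lemma card_nbhd_low_lt x : x \in X ->
  #|N x :&: [set y in Y | r * deg e y + 3 * D <= r * D]| < K.
Proof.
move=> xX; have := X_sub_Xstrong xX; rewrite inE xX => /existsP[y /andP[exy y_strong]].
have [y1] : exists2 y1, y1 \in N x & y1 \notin N x :&: Miss.
  apply: exists_setD_of_card_lt; rewrite -(@ltn_pmul2l r) ?(leq_trans _ r_ge4) //.
  have := strong_card_nbhd_Miss exy y_strong.
  have : 4 * deg e x <= r * deg e x by rewrite leq_mul2r r_ge4 orbT.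
  have := deg_big x; rewrite /deg; clear -r_ge4; lia.
rewrite in_setI in_nbhd => exy1; rewrite exy1 /= => y1_good.
have y1Y := bip_edgeXY bip exy1 xX; have ey1x : e y1 x by rewrite e_sym.
have D_split := cardsID (N y1) Nys.
have cap_y1 : #|Nys :&: N y1| <= #|N y1 :\ x|.+1.
  by rewrite -deg_nbhdD1 //; apply/subset_leq_card/subsetIr.
have : r * #|Nys :&: N y1| <= r * #|N y1 :\ x|.+1 by rewrite leq_mul2l cap_y1 orbT.
have := congr1 (muln r) D_split; have := ys_max y1Y; rewrite (deg_nbhdD1 ey1x).
move: y1_good; rewrite inE => /not_misses_lt y1_good.
have := deg_big ys; rewrite /deg => D_big deg_y1 r_split r_cap.
apply: leq_ltn_trans (few_missers exy1); apply/subset_leq_card/subsetP => q.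
rewrite !inE => /andP[exq /andP[qY q_low]]; rewrite exq andbT /=; apply/andP; split.
  apply: contraTneq q_low => ->; rewrite -[#|N y1|]/(deg e y1) (deg_nbhdD1 ey1x).
  clear -r_ge4 y1_good deg_y1 r_split r_cap; lia.
have := congr1 (muln r) (cardsID (N q) (N y1 :\ x)).
have : r * #|(N y1 :\ x) :&: N q| <= r * deg e q.
  by rewrite leq_mul2l (subset_leq_card (subsetIr _ _)) orbT.
rewrite /misses /deg in q_low *; clear -r_ge4 y1_good deg_y1 r_split r_cap q_low D_big; lia.
Qed.

End MaxDegree.

Lemma card_nbhd_low_maxdeg_lt x : x \in X ->
  #|N x :&: [set y in Y | r * deg e y + 3 * maxdeg e Y <= r * maxdeg e Y]| < K.
Proof.
move=> xX; have [y0 exy0] : exists y0, e x y0.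
  have : 0 < deg e x by apply: leq_trans (deg_big x); rewrite !muln_gt0; lia.
  by rewrite card_gt0 => /set0Pn[y0]; rewrite in_nbhd; exists y0.
have Y_n0 : 0 < #|Y| by apply/card_gt0P; exists y0; have := bip_edgeXY bip exy0 xX.
have [ys ysY ys_max] := eq_bigmax_cond (deg e) Y_n0.
rewrite /maxdeg ys_max; apply: card_nbhd_low_lt => // y yY.
by rewrite -ys_max; apply: leq_bigmax_cond.
Qed.

End Propagation.

Definition missers_bound (t r : nat) : nat := t * (2 * r) ^ t.

Definition degree_bound (t r : nat) : nat := 4 * r * (missers_bound t r + t + 2).

Local Open Scope ring_scope.

(* Any r with r * eps >= 3 works; the + 4 also gives r >= 4. *)
Definition eps_ratio (R : realType) (eps : R) : nat := (Num.truncn (3 / eps)).+4.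

Lemma eps_ratioP (R : realType) (eps : R) : 0 < eps -> 3 <= (eps_ratio eps)%:R * eps.
Proof.
move=> eps_gt0; rewrite -ler_pdivrMr // (le_trans (ltW (truncnS_gt _))) //.
by rewrite ler_nat /eps_ratio ltnS !leqW.
Qed.

Lemma lowdeg_sub (R : realType) (eps : R) (T : finType) (e : rel T) (Y : {set T}) r :
  3 <= r%:R * eps ->
  lowdeg e Y eps \subset [set y in Y | (r * deg e y + 3 * maxdeg e Y <= r * maxdeg e Y)%N].
Proof.
move=> r_eps; apply/subsetP => y; rewrite !inE => /andP[-> low] /=.
rewrite -(ler_nat R) !natrD !natrM.
have : 0 <= ((maxdeg e Y)%:R : R) by [].
have : 0 <= (r%:R : R) by [].
nra.
Qed.

Lemma card_nbhd_lowdeg_lt (R : realType) (eps : R) t r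
    (T : finType) (e : rel T) (X Y : {set T}) x :
  simple_graph e -> connected_graph e -> bipartite_parts e X Y ->
  min_deg_ge e (degree_bound t r) -> ~ has_induced_biclaw e t t ->
  (4 <= r)%N -> 3 <= r%:R * eps ->
  x \in X -> (#|nbhd e x :&: lowdeg e Y eps| < missers_bound t r)%N.
Proof.
move=> [e_sym e_irr] conn bip deg_big noS r_ge4 r_eps xX.
have few_missers u v : e u v -> (#|missers e r u v| < missers_bound t r)%N.
  move=> euv; have evu : e v u by rewrite e_sym.
  apply: card_missers_lt => //; [exact: bip_triangle_free bip | lia |].
  by have := deg_big v; rewrite /degree_bound /missers_bound (deg_nbhdD1 evu); lia.
have deg_big' v : (4 * r * (missers_bound t r + 2) <= deg e v)%N.
  by apply: leq_trans (deg_big v); rewrite leq_mul2l leq_add2r leq_addr orbT.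
apply: leq_ltn_trans (card_nbhd_low_maxdeg_lt e_sym bip conn r_ge4 few_missers deg_big' xX).
by apply/subset_leq_card/setIS/lowdeg_sub.
Qed.

Theorem mainTheorem10 (R : realType) :
  exists C : nat -> R -> nat,
    forall (t : nat) (eps : R), (0 < t)%N -> 0 < eps < 1 ->
    forall (T : finType) (e : rel T) (X Y : {set T}),
      simple_graph e -> connected_graph e -> bipartite_parts e X Y ->
      balanced X Y -> min_deg_ge e (C t eps) ->
      ~ has_induced_biclaw e t t ->
      (forall x, x \in X -> (#|nbhd e x :&: lowdeg e Y eps| <= C t eps)%N) /\
      (forall y, y \in Y -> (#|nbhd e y :&: lowdeg e X eps| <= C t eps)%N).
Proof.
exists (fun t eps => degree_bound t (eps_ratio eps)).
move=> t eps _ /andP[eps_gt0 _] T e X Y simple conn bip _ deg_big noS.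
set r := eps_ratio eps; have r_ge4 : (4 <= r)%N by [].
have bound_le : (missers_bound t r <= degree_bound t r)%N.
  by rewrite /degree_bound; set K := missers_bound t r; nia.
have r_eps := eps_ratioP eps_gt0.
split=> [x | y] w_in; apply/ltnW/(leq_trans _ bound_le).
  exact: card_nbhd_lowdeg_lt simple conn bip deg_big noS r_ge4 r_eps w_in.
exact: card_nbhd_lowdeg_lt simple conn (bipartite_parts_sym bip) deg_big noS r_ge4 r_eps w_in.
Qed.
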